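(* Let $R$ be an associative ring with unity and let $\mathbf{K}=(K,\leq_p)$ and $\mathbf{K}^\star=(K^\star,\leq_p)$ be AECs of left $R$-modules such that $\mathbf{K}^\star$ is closed below $\mathbf{K}$. Then $\mathbf{K}^\star$ admits intersections, and for every $N\in K^\star$ and $A\subseteq N$ we have $cl^N_{\mathbf{K}}(A)=cl^N_{\mathbf{K}^\star}(A)$.
   Context: $\leq_p$ is the pure submodule relation. An AEC $(K,\leq_p)$ admits intersections if for every $N\in K$ and $A\subseteq N$, the module $cl^N_{\mathbf{K}}(A)=\bigcap\{M\in K: M\leq_pN, A\subseteq M\}$ belongs to $K$ and is a pure submodule of $N$. $\mathbf{K}^\star$ is closed below $\mathbf{K}$ if $K^\star\subseteq K$, both $K$ and $K^\star$ are closed under pure submodules, and $\mathbf{K}$ admits intersections. *)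

From HB Require Import structures.
From mathcomp Require Import all_boot all_order all_algebra.
Set Implicit Arguments. Unset Strict Implicit. Unset Printing Implicit Defensive.
Import GRing.Theory.
Local Open Scope ring_scope.

Section Defs.
Variable R : pzRingType.

Definition modclass := lmodType R -> Prop.

Definition subset_of (N : lmodType R) (S T : N -> Prop) := forall x, S x -> T x.

Definition submod (N : lmodType R) (S : N -> Prop) :=
  [/\ S 0, (forall x y, S x -> S y -> S (x + y)) & (forall (r : R) x, S x -> S (r *: x))].

Definition solves (N : lmodType R) (m n : nat) (a : 'I_m -> 'I_n -> R)
  (b : 'I_m -> N) (x : 'I_n -> N) := forall i, \sum_(j < n) a i j *: x j = b i.

(* S <=_p T : S is a pure submodule of T (both subsets of an ambient module N):
   every finite linear system with parameters in S solvable in T is solvable in S. *)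
Definition pure_sub (N : lmodType R) (S T : N -> Prop) :=
  [/\ submod S, submod T, subset_of S T &
    forall (m n : nat) (a : 'I_m -> 'I_n -> R) (b : 'I_m -> N),
      (forall i, S (b i)) ->
      (exists x : 'I_n -> N, (forall j, T (x j)) /\ solves a b x) ->
      exists x : 'I_n -> N, (forall j, S (x j)) /\ solves a b x].

Definition pure_in (N : lmodType R) (S : N -> Prop) := pure_sub S (fun _ => True).

Definition is_linear (M N : lmodType R) (f : M -> N) :=
  (forall x y, f (x + y) = f x + f y) /\ (forall (r : R) x, f (r *: x) = r *: f x).

(* The submodule S of N belongs to K (i.e. is isomorphic to a member of K). *)
Definition inK (K : modclass) (N : lmodType R) (S : N -> Prop) :=
  exists (M : lmodType R) (f : M -> N),
    [/\ K M, is_linear f, injective f & forall y, S y <-> exists x, f x = y].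

Definition cl (K : modclass) (N : lmodType R) (A : N -> Prop) : N -> Prop :=
  fun x => forall S : N -> Prop, inK K S -> pure_in S -> subset_of A S -> S x.

Definition admits_intersections (K : modclass) :=
  forall N : lmodType R, K N -> forall A : N -> Prop,
    inK K (cl K A) /\ pure_in (cl K A).

Definition closed_under_pure_submodules (K : modclass) :=
  forall N : lmodType R, K N -> forall S : N -> Prop, pure_in S -> inK K S.

Definition closed_below (Kstar K : modclass) :=
  [/\ forall M, Kstar M -> K M, closed_under_pure_submodules K,
      closed_under_pure_submodules Kstar & admits_intersections K].

Definition AEC (K : modclass) :=
  [/\
      (forall (M N : lmodType R) (f : M -> N),
          K M -> is_linear f -> bijective f -> K N),
      (forall (N : lmodType R) (S0 S1 S2 : N -> Prop),
          inK K S0 -> inK K S1 -> inK K S2 ->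
          subset_of S0 S1 -> pure_sub S0 S2 -> pure_sub S1 S2 -> pure_sub S0 S1),
      (forall (N : lmodType R) (C : (N -> Prop) -> Prop),
          (exists S, C S) ->
          (forall S, C S -> inK K S) ->
          (forall S T, C S -> C T -> pure_sub S T \/ pure_sub T S) ->
          let U := fun x => exists2 S, C S & S x in
          inK K U /\ (forall S, C S -> pure_sub S U) /\
          (forall T, inK K T -> (forall S, C S -> pure_sub S T) -> pure_sub U T)) &
      (* Loewenheim-Skolem axiom, with LS(K) >= |R| + aleph_0 *)
      (exists L : Type,
          [/\ (exists f : R -> L, injective f), (exists g : nat -> L, injective g) &
            forall (N : lmodType R), K N -> forall A : N -> Prop,
              exists S : N -> Prop,
                [/\ inK K S, pure_in S, subset_of A S &
                  exists h : {x : N | S x} -> ({x : N | A x} + L)%type, injective h]])].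

End Defs.

From mathcomp Require Import all_boot all_order all_algebra.
From Stdlib Require Import FunctionalExtensionality PropExtensionality.

Set Implicit Arguments.
Unset Strict Implicit.
Unset Printing Implicit Defensive.

(* For N in K^star and A a subset of N, the module cl^N_K(A) is a pure
   submodule of N lying in K; closure of K^star under pure submodules puts it
   in K^star, so it is one of the modules intersected in cl^N_{K^star}(A) and
   the two closures coincide. *)

Section Closure.
Variable R : pzRingType.
Implicit Types (K : modclass R) (N : lmodType R).

Lemma inK_subclass K1 K2 N (S : N -> Prop) :
  (forall M, K1 M -> K2 M) -> inK K1 S -> inK K2 S.
Proof. by move=> K12 [M [f [K1M lin_f inj_f def_S]]]; exists M, f; split; auto. Qed.

Lemma cl_extensive K N (A : N -> Prop) : subset_of A (cl K A).
Proof. by move=> x Ax S _ _; apply. Qed.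

Lemma cl_min K N (A S : N -> Prop) :
  inK K S -> pure_in S -> subset_of A S -> subset_of (cl K A) S.
Proof. by move=> KS pS AS x; apply. Qed.

Lemma cl_antimono K1 K2 N (A : N -> Prop) :
  (forall M, K1 M -> K2 M) -> subset_of (cl K2 A) (cl K1 A).
Proof. by move=> K12 x clx S K1S; apply: clx; apply: inK_subclass K1S. Qed.

Section ClosedBelow.
Variables Kstar K : modclass R.
Hypothesis below : closed_below Kstar K.

Lemma inK_pure_cl_closed_below N (A : N -> Prop) :
  Kstar N -> inK Kstar (cl K A) /\ pure_in (cl K A).
Proof.
case: below => Kstar_K _ pure_Kstar intK KstarN.
have [_ pure_cl] := intK N (Kstar_K N KstarN) A.
by split=> //; apply: pure_Kstar.
Qed.

Lemma cl_eq_closed_below N (A : N -> Prop) : Kstar N -> cl K A = cl Kstar A.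
Proof.
move=> KstarN; have [Kstar_K _ _ _] := below.
have [Kstar_cl pure_cl] := inK_pure_cl_closed_below A KstarN.
apply: functional_extensionality => x; apply: propositional_extensionality.
split; first exact: cl_antimono Kstar_K x.
exact: cl_min Kstar_cl pure_cl (cl_extensive (A := A)) x.
Qed.

Lemma admits_intersections_closed_below : admits_intersections Kstar.
Proof.
move=> N KstarN A; rewrite -cl_eq_closed_below //.
exact: inK_pure_cl_closed_below.
Qed.

End ClosedBelow.
End Closure.

Theorem proposition5p3 (R : pzRingType) (K Kstar : modclass R) :
  AEC K -> AEC Kstar -> closed_below Kstar K ->
  admits_intersections Kstar /\
  (forall (N : lmodType R), Kstar N -> forall (A : N -> Prop) (x : N),
     cl K A x <-> cl Kstar A x).
Proof.
move=> _ _ below; split; first exact: admits_intersections_closed_below below.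
by move=> N KstarN A x; rewrite (cl_eq_closed_below below A KstarN).
Qed.
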